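(* Let $p=p_1\dots p_r$ and $p'=p'_1\dots p'_r$ be consecutive patterns with $p_1=p'_1$, $p_r=p'_r$ and $\max_i p_i=\max_i p'_i$. Then $p$ is changeable for $p'$ if and only if for every $n$, every $e\in\mathbf{I}_n$, and every occurrence of $p$ in $e$, the change of that occurrence of $p$ into an occurrence of $p'$ is valid.
   Context: An inversion sequence of length $n$ is an integer sequence $e=e_1e_2\dots e_n$ with $0\le e_i<i$ for all $i$; $\mathbf{I}_n$ denotes the set of these. A pattern of length $r$ is a sequence $p=p_1\dots p_r$ with $p_i\in\{0,\dots,r-1\}$ such that whenever a value $j>0$ appears in $p$, the value $j-1$ also appears. The reduction of an integer word $w$ is obtained by replacing every occurrence of the $i$-th smallest distinct value of $w$ by $i-1$. An inversion sequence $e$ has an occurrence of the consecutive pattern $p$ in position $i$ if the reduction of $e_i\dots e_{i+r-1}$ equals $p$. Change: let $d=\max_i p_i=\max_i p'_i$; if $e\in\mathbf{I}_n$ has an occurrence of $p$ in position $i$, let $f:\{0,\dots,d\}\to\{e_i,\dots,e_{i+r-1}\}$ be the order-preserving bijection with $e_{i+t-1}=f(p_t)$ for $1\le t\le r$; the change of this occurrence into an occurrence of $p'$ is the sequence $e'$ with $e'_{i+t-1}=f(p'_t)$ for $1\le t\le r$ and $e'_j=e_j$ for $j<i$ or $j>i+r-1$. The change is valid if $e'\in\mathbf{I}_n$. $p$ is changeable for $p'$ if for all $1\le i\le r$, $p'_i\le\max(\{p_j:1\le j\le i\}\cup\{p_j-j+i: i<j\le r\})$. *)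

(* Sequences are 0-indexed seq nat. *)
From mathcomp Require Import all_boot.
Set Implicit Arguments. Unset Strict Implicit. Unset Printing Implicit Defensive.

(* e is an inversion sequence of length n: 0 <= e_i < i (1-indexed),
   i.e. with 0-indexed positions k, e`_k < k.+1 *)
Definition inv_seq (n : nat) (e : seq nat) : Prop :=
  size e = n /\ forall k, k < n -> nth 0 e k < k.+1.

Definition is_pattern (r : nat) (p : seq nat) : Prop :=
  size p = r /\ (forall t, t < r -> nth 0 p t < r) /\
  (forall j, 0 < j -> j \in p -> j.-1 \in p).

Definition values (w : seq nat) : seq nat := sort leq (undup w).

Definition reduction (w : seq nat) : seq nat :=
  map (fun x => index x (values w)) w.

Definition window (e : seq nat) (i r : nat) : seq nat := take r (drop i e).

Definition occurs_at (p e : seq nat) (i : nat) : Prop :=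
  i + size p <= size e /\ reduction (window e i (size p)) = p.

(* the change of the occurrence of p at position i into an occurrence of p':
   f is the order-preserving bijection {0..d} -> values of the window *)
Definition change (p p' e : seq nat) (i : nat) : seq nat :=
  let f := fun k => nth 0 (values (window e i (size p))) k in
  take i e ++ map f p' ++ drop (i + size p) e.

Definition valid_change (p p' e : seq nat) (i : nat) : Prop :=
  inv_seq (size e) (change p p' e i).

(* p is changeable for p' (0-indexed version of:
   p'_i <= max({p_j : j <= i} U {p_j - j + i : i < j <= r}));
   truncated subtraction is harmless since the max is >= p_0 >= 0 anyway *)
Definition changeable (p p' : seq nat) : Prop :=
  forall i, i < size p ->
    nth 0 p' i <= maxn (\max_(j < size p | j <= i) nth 0 p j)
                       (\max_(j < size p | i < j) (nth 0 p j - (j - i))).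

From mathcomp Require Import all_boot.
From mathcomp Require Import zify.

Set Implicit Arguments.
Unset Strict Implicit.
Unset Printing Implicit Defensive.

(* The key observation is that [changeable p p'] says exactly that every entry
   of p' is dominated by p: for each t there is a j with p'_t + (j - t) <= p_j
   (for j <= t this reads p'_t <= p_j, for j > t it reads p'_t <= p_j - (j - t));
   see [changeableE].

   (=>) Let f be the increasing bijection from {0..d} onto the values of an
   occurrence of p at position i of e.  As f is strictly increasing, domination
   gives f(p'_t) <= f(p_j) - (p_j - p'_t) <= e_(i+j) - (j - t) <= i + t, so the
   new entry at position i + t is still admissible ([change_valid]).

   (<=) If p'_t is not dominated, put p at position r after r zeros, with every
   value >= p'_t lifted by r + t + 1 - p'_t.  Non-domination is exactly what
   keeps this an inversion sequence, while the change writes r + t + 1 at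
   position r + t ([undominated_counterexample]).  Here p'_t <= max p is needed. *)

Lemma values_uniq (w : seq nat) : uniq (values w).
Proof. by rewrite /values sort_uniq undup_uniq. Qed.

Lemma values_sorted (w : seq nat) : sorted ltn (values w).
Proof.
by rewrite ltn_sorted_uniq_leq values_uniq sort_sorted //; exact: leq_total.
Qed.

Lemma mem_values (w : seq nat) (x : nat) : (x \in values w) = (x \in w).
Proof. by rewrite /values mem_sort mem_undup. Qed.

Lemma nth_values_reduction (w : seq nat) (j : nat) : j < size w ->
  nth 0 (values w) (nth 0 (reduction w) j) = nth 0 w j.
Proof. by move=> hj; rewrite (nth_map 0) // nth_index // mem_values mem_nth. Qed.

Lemma reduction_lt (w : seq nat) (x : nat) :
  x \in reduction w -> x < size (values w).
Proof. by case/mapP=> y hy ->; rewrite index_mem mem_values. Qed.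

Lemma sorted_ltn_nth_gap (s : seq nat) (a b : nat) :
  sorted ltn s -> a <= b -> b < size s -> nth 0 s a + (b - a) <= nth 0 s b.
Proof.
move=> hs; elim: b => [|b IH] hab hb; first by move: hab; rewrite leqn0 => /eqP ->; rewrite addn0.
case: (eqVneq a b.+1) => [->|hne]; first by rewrite subnn addn0.
have lt_b : nth 0 s b < nth 0 s b.+1.
  by apply: (sorted_ltn_nth ltn_trans) => //; rewrite inE; lia.
have hab' : a <= b by rewrite -ltnS ltn_neqAle hne.
by have := IH hab' (ltnW hb); lia.
Qed.

Lemma values_map (g : nat -> nat) (s : seq nat) :
  {homo g : a b / a < b} -> values (map g s) = map g (values s).
Proof.
move=> g_incr; have g_mono := leq_mono g_incr.
have g_inj : injective g := mono_inj leqnn anti_leq g_mono.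
by rewrite /values undup_map_inj // (map_sort g_mono).
Qed.

Lemma reduction_map (g : nat -> nat) (s : seq nat) :
  {homo g : a b / a < b} -> reduction (map g s) = reduction s.
Proof.
move=> g_incr; have g_inj := mono_inj leqnn anti_leq (leq_mono g_incr).
rewrite /reduction values_map // -map_comp; apply: eq_map => x /=.
by rewrite index_map.
Qed.

Lemma bigmax_mem (s : seq nat) : s != [::] -> \max_(x <- s) x \in s.
Proof.
elim: s => // a s IH _; rewrite big_cons.
case: s IH => [|b s] IH; first by rewrite big_nil maxn0 mem_head.
rewrite /maxn; case: ifP => _; last exact: mem_head.
by rewrite in_cons IH ?orbT.
Qed.

Lemma pattern_closed (r : nat) (p : seq nat) : is_pattern r p ->
  forall x, x \in p -> forall y, y <= x -> y \in p.
Proof.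
move=> [_ [_ pred_in]] x px y; elim: x px => [|x IH] px hy.
  by have -> : y = 0 by lia.
case: (eqVneq y x.+1) => [->//|hne].
by apply: IH; [exact: (pred_in x.+1) | lia].
Qed.

Lemma pattern_values (r : nat) (p : seq nat) : is_pattern r p -> p != [::] ->
  values p = iota 0 (\max_(x <- p) x).+1.
Proof.
move=> Pp pne.
apply: (sorted_eq leq_trans anti_leq); first by apply: sort_sorted; exact: leq_total.
  exact: iota_sorted.
apply: uniq_perm; [exact: values_uniq | exact: iota_uniq |] => y.
rewrite mem_values mem_iota leq0n add0n ltnS /=.
apply/idP/idP => [py|]; first exact: (leq_bigmax_seq (F := id)).
exact: (pattern_closed Pp (bigmax_mem pne)).
Qed.

Lemma pattern_reduction (r : nat) (p : seq nat) : is_pattern r p -> reduction p = p.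
Proof.
move=> Pp; case: (eqVneq p [::]) => [->//|pne].
rewrite /reduction (pattern_values Pp pne); apply: map_id_in => x px.
set N := (\max_(x <- p) x).+1.
have x_lt : x < size (iota 0 N).
  by rewrite size_iota ltnS; exact: (leq_bigmax_seq (F := id)).
have := index_uniq 0 x_lt (iota_uniq 0 N).
by rewrite nth_iota // -(size_iota 0 N).
Qed.

Lemma nth_window (e : seq nat) (i n j : nat) :
  j < n -> nth 0 (window e i n) j = nth 0 e (i + j).
Proof. by move=> hj; rewrite /window nth_take // nth_drop. Qed.

Lemma size_window (e : seq nat) (i n : nat) :
  i + n <= size e -> size (window e i n) = n.
Proof. by move=> fits; rewrite /window size_takel // size_drop; lia. Qed.

Lemma size_change (p p' e : seq nat) (i : nat) :
  size p' = size p -> i + size p <= size e -> size (change p p' e i) = size e.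
Proof.
by move=> hs' fits; rewrite /change !size_cat size_map size_takel ?size_drop; lia.
Qed.

Lemma nth_change (p p' e : seq nat) (i k : nat) :
  size p' = size p -> i + size p <= size e ->
  nth 0 (change p p' e i) k =
  if i <= k < i + size p
  then nth 0 (values (window e i (size p))) (nth 0 p' (k - i))
  else nth 0 e k.
Proof.
move=> hs' fits; rewrite /change nth_cat size_takel; last lia.
have [ki|ik] := ltnP k i; first by rewrite nth_take // leqNgt ki.
rewrite /= nth_cat size_map hs'.
have [kin|kout] := ltnP (k - i) (size p); first by rewrite (nth_map 0) ?hs' //; case: ltnP; lia.
rewrite nth_drop; case: ltnP => [|_]; first lia.
by congr nth; lia.
Qed.

Definition dominated (p p' : seq nat) (t : nat) : bool :=
  [exists j : 'I_(size p), nth 0 p' t + (j - t) <= nth 0 p j].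

Lemma changeableE (p p' : seq nat) :
  changeable p p' <-> forall t, t < size p -> dominated p p' t.
Proof.
split=> changeable_p t ht.
- apply: contraT => /existsPn below.
  have pt_lt : nth 0 p t < nth 0 p' t.
    by have := below (Ordinal ht); rewrite /= subnn addn0 -ltnNge.
  have := changeable_p t ht; apply: contraLR => _; rewrite -ltnNge gtn_max.
  by apply/andP; split; rewrite -(ltn_predK pt_lt) ltnS;
    apply/bigmax_leqP => j hj; have := below j; lia.
- have [j hj] := existsP (changeable_p t ht).
  rewrite leq_max; have [jt|tj] := leqP j t.
    apply/orP; left; apply: leq_trans (leq_bigmax_cond _ jt); lia.
  apply/orP; right; apply: leq_trans (leq_bigmax_cond _ tj); lia.
Qed.

Lemma changed_entry_bound (p p' e : seq nat) (i t : nat) :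
  inv_seq (size e) e -> occurs_at p e i -> dominated p p' t ->
  nth 0 (values (window e i (size p))) (nth 0 p' t) <= i + t.
Proof.
move=> [_ e_inv] [fits occ] /existsP [j dom_j].
set w := window e i (size p); have hw : size w = size p by exact: size_window.
have j_lt : j < size w by rewrite hw.
have f_pj : nth 0 (values w) (nth 0 p j) = nth 0 e (i + j).
  by have := nth_values_reduction j_lt; rewrite occ nth_window.
have pj_lt : nth 0 p j < size (values w) by apply: reduction_lt; rewrite occ mem_nth.
have m_le : nth 0 p' t <= nth 0 p j by lia.
have := sorted_ltn_nth_gap (values_sorted w) m_le pj_lt.
have := e_inv (i + j) ltac:(lia); rewrite -f_pj; lia.
Qed.

Lemma change_valid (p p' e : seq nat) (i : nat) :
  size p' = size p -> changeable p p' ->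
  inv_seq (size e) e -> occurs_at p e i -> valid_change p p' e i.
Proof.
move=> hs' /changeableE dom e_inv occ; have [fits _] := occ.
split; first exact: size_change.
move=> k hk; rewrite nth_change //; case: ifP => [/andP [ik ki]|_].
  have := changed_entry_bound e_inv occ (dom (k - i) ltac:(lia)); lia.
by case: e_inv => _; apply.
Qed.

Definition lift_from (m c k : nat) : nat := if k < m then k else k + c.

Lemma lift_from_incr (m c : nat) : {homo lift_from m c : a b / a < b}.
Proof. by move=> a b ab; rewrite /lift_from; case: (ltnP a m); case: (ltnP b m); lia. Qed.

Lemma undominated_counterexample (r : nat) (p p' : seq nat) (t : nat) :
  is_pattern r p -> size p' = r -> t < r ->
  nth 0 p' t <= \max_(x <- p) x -> ~~ dominated p p' t ->
  exists e, [/\ inv_seq (size e) e, occurs_at p e r & ~ valid_change p p' e r].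
Proof.
move=> Pp hs' ht; have [sp [p_lt_r _]] := Pp.
set m := nth 0 p' t; set d := \max_(x <- p) x => m_le_d /existsPn undominated.
have below j : j < r -> nth 0 p j < m + (j - t).
  by rewrite -sp => hj; have := undominated (Ordinal hj); rewrite -ltnNge.
have pne : p != [::] by rewrite -size_eq0 sp; case: (r) ht.
have d_lt_r : d < r.
  by have := bigmax_mem pne; rewrite -/d => /(nthP 0) [k hk <-]; apply: p_lt_r; rewrite -sp.
set g := lift_from m (r + t + 1 - m).
set e := nseq r 0 ++ map g p.
have se : size e = r + r by rewrite size_cat size_nseq size_map sp.
have win : window e r (size p) = map g p.
  by rewrite /window drop_size_cat ?size_nseq // take_oversize // size_map.
have occ : occurs_at p e r.
  split; first by rewrite se sp.
  by rewrite win reduction_map ?(pattern_reduction Pp) //; exact: lift_from_incr.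
have e_inv : inv_seq (size e) e.
  split=> // k; rewrite se => hk; rewrite nth_cat size_nseq.
  case: (ltnP k r) => kr; first by rewrite nth_nseq kr.
  have hj : k - r < size p by rewrite sp; lia.
  rewrite (nth_map 0) // /g /lift_from.
  have := below (k - r) ltac:(lia); have := p_lt_r (k - r) ltac:(lia).
  by case: (ltnP (nth 0 p (k - r)) m); lia.
exists e; split=> // - [_ changed_inv].
have := changed_inv (r + t) ltac:(rewrite se; lia).
have [fits _] := occ; have same_size : size p' = size p by rewrite hs' sp.
have ht' : t < size p by rewrite sp.
rewrite nth_change // (leq_addr t r) ltn_add2l ht' addKn win.
rewrite values_map; last exact: lift_from_incr.
rewrite (pattern_values Pp pne) (nth_map 0) ?size_iota ?ltnS //.
by rewrite nth_iota ?ltnS // add0n /g /lift_from -/m ltnn; lia.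
Qed.

Theorem mainTheorem4 (r : nat) (p p' : seq nat) :
  is_pattern r p -> is_pattern r p' ->
  nth 0 p 0 = nth 0 p' 0 ->
  nth 0 p r.-1 = nth 0 p' r.-1 ->
  \max_(x <- p) x = \max_(x <- p') x ->
  (changeable p p' <->
   forall (n : nat) (e : seq nat), inv_seq n e ->
     forall i : nat, occurs_at p e i -> valid_change p p' e i).
Proof.
move=> Pp Pp' _ _ same_max; have [sp _] := Pp; have [sp' _] := Pp'.
split=> [changeable_p n e e_inv i occ | all_valid].
- have [size_e _] := e_inv; subst n.
  by apply: change_valid; rewrite ?sp ?sp'.
- apply/changeableE => t ht; apply: contraT => undominated.
  have m_le : nth 0 p' t <= \max_(x <- p) x.
    by rewrite same_max; apply: (leq_bigmax_seq (F := id)); rewrite ?mem_nth ?sp' -?sp.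
  rewrite sp in ht.
  have [e [e_inv occ invalid]] := undominated_counterexample Pp sp' ht m_le undominated.
  by case: (invalid (all_valid _ _ e_inv _ occ)).
Qed.
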